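(* Let $\star$ be a state over time function satisfying axiom (E). Then $\star$ satisfies axiom (P) if and only if for all systems $A,B$, every $\mathcal{E}_{B|A}\in\mathfrak{C}(A,B)$ and every $\rho_A\in\mathfrak{S}(A)$, $$\mathcal{E}_{B|A}\star\rho_A=(\mathrm{id}_A\otimes\mathcal{E}_{B|A'})(\mathrm{id}_{A'|A}\star\rho_A).$$ Moreover, in this case $\star$ is process-linear, and $\star$ can be linearly extended to arbitrary linear maps $\mathcal{E}_{B|A}:\mathfrak{B}(A)\to\mathfrak{B}(B)$ (not necessarily channels) through this formula.
   Context: Systems are finite-dimensional Hilbert spaces; $\mathfrak{B}(A)$ linear operators, $\mathfrak{S}(A)$ density operators, $\mathfrak{C}(A,B)$ quantum channels (CPTP maps $\mathfrak{B}(A)\to\mathfrak{B}(B)$). $A'$ is a copy of $A$ (isomorphic systems identified), $\mathrm{id}_{A'|A}$ the identity channel, and $\mathcal{E}_{B|A'}$ is the map $\mathcal{E}_{B|A}$ acting on the copy $A'$. A state over time function assigns to all systems $A,B$ a map $\star:\mathfrak{C}(A,B)\times\mathfrak{S}(A)\to\mathfrak{B}(A\otimes B)$, $(\mathcal{E},\rho)\mapsto\mathcal{E}_{B|A}\star\rho_A$, with $\mathrm{Tr}_A[\mathcal{E}\star\rho]=\mathcal{E}(\rho)$ and $\mathrm{Tr}_B[\mathcal{E}\star\rho]=\rho$, extended homogeneously by $(\lambda\mathcal{E})\star\rho=\mathcal{E}\star(\lambda\rho)=\lambda(\mathcal{E}\star\rho)$, $\lambda\in\mathbb{C}$. It is process-linear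 if linear in the first argument. A quantum state over spacetime on $A\otimes E$ is either a density operator on $A\otimes E$ or an operator of the form $\mathcal{F}\star\sigma$. Axiom (E): for all systems $A,B,E$, every quantum state over spacetime $\rho_{AE}$ and every channel $\mathcal{E}_{B|A}$, an operator $\mathcal{E}_{B|A}\star\rho_{AE}$ on $A\otimes B\otimes E$ is defined such that for every completely positive trace-non-increasing map $\mathcal{I}_E$ on $E$, $\mathcal{I}_E[\mathcal{E}\star\rho_{AE}]=\mathcal{E}\star\mathcal{I}_E(\rho_{AE})$, and $\mathrm{Tr}_A[\mathcal{E}\star\rho_{AE}]=(\mathcal{E}\otimes\mathrm{id}_E)(\rho_{AE})$. Axiom (P): for all channels $\mathcal{E}_{B|A}$, $\mathcal{F}_{C|B}$ and states $\rho_A$, $\mathrm{Tr}_B[\mathcal{F}_{C|B}\star(\mathcal{E}_{B|A}\star\rho_A)]=(\mathcal{F}\circ\mathcal{E})_{C|A}\star\rho_A$, where $\mathcal{F}_{C|B}\star(\cdot)$ acts on the $B$-part of the state over spacetime on $A\otimes B$ with $A$ as spectator system as in axiom (E). *)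

(* Quantum systems = finite types (index sets of an
   orthonormal basis); operators = complex-valued functions I -> I -> C. *)
From HB Require Import structures.
From mathcomp Require Import all_boot all_order all_algebra.
From mathcomp Require Import complex.
From mathcomp Require Import reals.
Set Implicit Arguments. Unset Strict Implicit. Unset Printing Implicit Defensive.
Import Order.TTheory GRing.Theory Num.Theory.
Local Open Scope ring_scope.

Section QDefs.
Variable C : numClosedFieldType.
Implicit Types A B D E X Y : finType.

Definition Op (A : finType) := A -> A -> C.

Definition op_add A (X Y : Op A) : Op A := fun i j => X i j + Y i j.
Definition op_scale A (a : C) (X : Op A) : Op A := fun i j => a * X i j.

Definition trace A (X : Op A) : C := \sum_(i : A) X i i.

Definition psd A (X : Op A) : Prop :=
  forall v : A -> C, 0 <= \sum_(i : A) \sum_(j : A) (v i)^* * X i j * v j.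

Definition density A (X : Op A) : Prop := psd X /\ trace X = 1.

Definition linmap A B (Phi : Op A -> Op B) : Prop :=
  forall (a : C) (X Y : Op A),
    Phi (op_add (op_scale a X) Y) = op_add (op_scale a (Phi X)) (Phi Y).

(* Phi (x) id_E  acting on the first tensor factor of A (x) E *)
Definition tensR A B E (Phi : Op A -> Op B) (M : Op (A * E)%type) : Op (B * E)%type :=
  fun p q => Phi (fun a a' => M (a, p.2) (a', q.2)) p.1 q.1.

(* id_X (x) Phi  acting on the second tensor factor of X (x) A *)
Definition tensL X A B (Phi : Op A -> Op B) (M : Op (X * A)%type) : Op (X * B)%type :=
  fun p q => Phi (fun a a' => M (p.1, a) (q.1, a')) p.2 q.2.

Definition ptr1 X Y (M : Op (X * Y)%type) : Op Y :=
  fun y y' => \sum_(x : X) M (x, y) (x, y').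
Definition ptr2 X Y (M : Op (X * Y)%type) : Op X :=
  fun x x' => \sum_(y : Y) M (x, y) (x', y).
Definition ptr_first3 A B E (M : Op ((A * B) * E)%type) : Op (B * E)%type :=
  fun p q => \sum_(a : A) M ((a, p.1), p.2) ((a, q.1), q.2).

Definition swap X Y (M : Op (X * Y)%type) : Op (Y * X)%type :=
  fun p q => M (p.2, p.1) (q.2, q.1).

Definition idmap_op A : Op A -> Op A := fun M => M.

Definition CP A B (Phi : Op A -> Op B) : Prop :=
  forall (k : nat) (M : Op (A * 'I_k)%type), psd M -> psd (tensR Phi M).

Definition TP A B (Phi : Op A -> Op B) : Prop :=
  forall X : Op A, trace (Phi X) = trace X.

Definition TNI A B (Phi : Op A -> Op B) : Prop :=
  forall X : Op A, psd X -> trace (Phi X) <= trace X.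

Definition channel A B (Phi : Op A -> Op B) : Prop :=
  [/\ linmap Phi, CP Phi & TP Phi].

Definition StarFun :=
  forall A B : finType, (Op A -> Op B) -> Op A -> Op (A * B)%type.

(* the extension of axiom (E): (E_{B|A}, rho_{AE}) |-> E * rho_{AE} on A(x)B(x)E *)
Definition ExtFun :=
  forall A B E : finType, (Op A -> Op B) -> Op (A * E)%type -> Op ((A * B) * E)%type.

Definition state_over_time (star : StarFun) : Prop :=
  forall (A B : finType) (Phi : Op A -> Op B) (rho : Op A),
    channel Phi -> density rho ->
    ptr1 (star A B Phi rho) = Phi rho /\ ptr2 (star A B Phi rho) = rho.

(* quantum states over spacetime on X (x) Y (tensor factors may be
   identified up to swapping, since isomorphic systems are identified) *)
Definition spacetime_state (star : StarFun) X Y (M : Op (X * Y)%type) : Prop :=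
  density M
  \/ (exists (F : Op X -> Op Y) (s : Op X),
        [/\ channel F, density s & M = star X Y F s])
  \/ (exists (F : Op Y -> Op X) (s : Op Y),
        [/\ channel F, density s & M = swap (star Y X F s)]).

Definition axiomE (star : StarFun) (ext : ExtFun) : Prop :=
  forall (A B E : finType) (Phi : Op A -> Op B) (rho : Op (A * E)%type),
    channel Phi -> spacetime_state star rho ->
    (forall I : Op E -> Op E, linmap I -> CP I -> TNI I ->
       tensL I (ext A B E Phi rho) = ext A B E Phi (tensL I rho))
    /\ ptr_first3 (ext A B E Phi rho) = tensR Phi rho.

(* axiom (P): F_{C|B} acts on the B-part of E * rho (on A(x)B, viewed as a
   state over spacetime on B(x)A with spectator A), then B is traced out *)
Definition axiomP (star : StarFun) (ext : ExtFun) : Prop :=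
  forall (A B D : finType) (Phi : Op A -> Op B) (F : Op B -> Op D) (rho : Op A),
    channel Phi -> channel F -> density rho ->
    ptr_first3 (ext B D A F (swap (star A B Phi rho)))
    = swap (star A D (F \o Phi) rho).

Definition id_formula (star : StarFun) : Prop :=
  forall (A B : finType) (Phi : Op A -> Op B) (rho : Op A),
    channel Phi -> density rho ->
    star A B Phi rho = tensL Phi (star A A (@idmap_op A) rho).

(* process-linearity: linear in the channel argument, where * is extended
   homogeneously to scalar multiples of channels:
   if  sum_k lam_k E_k = mu F  then  mu (F * rho) = sum_k lam_k (E_k * rho). *)
Definition process_linear (star : StarFun) : Prop :=
  forall (A B : finType) (rho : Op A) (n : nat)
         (lam : 'I_n -> C) (Es : 'I_n -> Op A -> Op B) (mu : C) (F : Op A -> Op B),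
    density rho -> (forall k, channel (Es k)) -> channel F ->
    (forall X : Op A, op_scale mu (F X) = fun i j => \sum_k lam k * Es k X i j) ->
    op_scale mu (star A B F rho) = fun i j => \sum_k lam k * star A B (Es k) rho i j.

Definition LinStarFun :=
  forall A B : finType, (Op A -> Op B) -> Op A -> Op (A * B)%type.

Definition linear_extension_via_formula (star : StarFun) (starL : LinStarFun) : Prop :=
  forall (A B : finType) (rho : Op A), density rho ->
    [/\ (forall (a : C) (Phi Psi : Op A -> Op B), linmap Phi -> linmap Psi ->
           starL A B (fun M => op_add (op_scale a (Phi M)) (Psi M)) rho
           = op_add (op_scale a (starL A B Phi rho)) (starL A B Psi rho)),
        (forall Phi : Op A -> Op B, linmap Phi ->
           starL A B Phi rho = tensL Phi (star A A (@idmap_op A) rho))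
      & (forall Phi : Op A -> Op B, channel Phi ->
           starL A B Phi rho = star A B Phi rho)].

End QDefs.

(* Axiom (E) evaluates the partial trace appearing in axiom (P): tracing A out
   of F * (E * rho), with A as spectator, gives (F (x) id_A)(E * rho).  Hence (P)
   says exactly that (F o E) * rho = (id_A (x) F)(E * rho) for all channels E, F.
   Taking E = id gives the formula; conversely, since (id (x) F)(id (x) E) is
   id (x) (F o E), the formula implies this composition law.  The formula is
   manifestly linear in the process, which yields process-linearity and the
   linear extension. *)
From HB Require Import structures.
From mathcomp Require Import all_boot all_order all_algebra.
From mathcomp Require Import complex.
From mathcomp Require Import reals.
From Stdlib Require Import FunctionalExtensionality.

Set Implicit Arguments.
Unset Strict Implicit.
Import GRing.Theory.
Local Open Scope ring_scope.

Section TensorCalculus.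
Variable C : numClosedFieldType.

Lemma channel_id (A : finType) : channel (@idmap_op C A).
Proof.
split=> [a X Y | k M psdM | X] //.
have -> : tensR (@idmap_op C A) M = M.
  by apply: functional_extensionality => -[??]; apply: functional_extensionality => -[??].
exact: psdM.
Qed.

Lemma channel_comp (A B D : finType) (Phi : Op C A -> Op C B) (F : Op C B -> Op C D) :
  channel Phi -> channel F -> channel (F \o Phi).
Proof.
case=> linPhi cpPhi tpPhi [linF cpF tpF]; split.
- by move=> a X Y; rewrite /= linPhi linF.
- by move=> k M psdM; exact: cpF (cpPhi k M psdM).
- by move=> X; rewrite /= tpF tpPhi.
Qed.

Lemma swap_inj (X Y : finType) : injective (@swap C X Y).
Proof.
move=> M N eqMN; apply: functional_extensionality => -[x y].
apply: functional_extensionality => -[x' y'].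
exact: (f_equal (fun S => S (y, x) (y', x')) eqMN).
Qed.

Lemma tensR_swap (A B D : finType) (F : Op C B -> Op C D) (N : Op C (A * B)%type) :
  tensR F (swap N) = swap (tensL F N).
Proof. by []. Qed.

Lemma tensL_lincomb (X A B : finType) (n : nat) (lam : 'I_n -> C)
    (Phis : 'I_n -> Op C A -> Op C B) (mu : C) (Phi : Op C A -> Op C B) (N : Op C (X * A)%type) :
  (forall M, op_scale mu (Phi M) = fun i j => \sum_k lam k * Phis k M i j) ->
  op_scale mu (tensL Phi N) = fun p q => \sum_k lam k * tensL (Phis k) N p q.
Proof.
move=> eqPhi; apply: functional_extensionality => p.
apply: functional_extensionality => q.
exact: (f_equal (fun S => S p.2 q.2) (eqPhi _)).
Qed.

Lemma tensL_add_scale (X A B : finType) (a : C) (Phi Psi : Op C A -> Op C B)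
    (N : Op C (X * A)%type) :
  tensL (fun M => op_add (op_scale a (Phi M)) (Psi M)) N
  = op_add (op_scale a (tensL Phi N)) (tensL Psi N).
Proof. by []. Qed.

End TensorCalculus.

Section StateOverTime.
Variables (C : numClosedFieldType) (star : StarFun C).
Arguments star : clear implicits.

Definition star_comp_law : Prop :=
  forall (A B D : finType) (Phi : Op C A -> Op C B) (F : Op C B -> Op C D) (rho : Op C A),
    channel Phi -> channel F -> density rho ->
    star A D (F \o Phi) rho = tensL F (star A B Phi rho).

Definition star_via_id : LinStarFun C :=
  fun A B Phi rho => tensL Phi (star A A (@idmap_op C A) rho).

Lemma axiomP_star_comp_law (ext : ExtFun C) :
  axiomE star ext -> axiomP star ext <-> star_comp_law.
Proof.
move=> axE.
have ptr_ext A B D (Phi : Op C A -> Op C B) (F : Op C B -> Op C D) rho :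
    channel Phi -> channel F -> density rho ->
    ptr_first3 (ext B D A F (swap (star A B Phi rho))) = swap (tensL F (star A B Phi rho)).
  move=> chPhi chF dens.
  have st : spacetime_state star (swap (star A B Phi rho)).
    by right; right; exists Phi, rho.
  by have [_ ->] := axE _ _ _ _ _ chF st; rewrite tensR_swap.
split=> law A B D Phi F rho chPhi chF dens.
- by apply: swap_inj; rewrite -law // ptr_ext.
- by rewrite ptr_ext // law.
Qed.

Lemma star_comp_law_id_formula : star_comp_law <-> id_formula star.
Proof.
split=> law A B.
- by move=> Phi rho chPhi dens; apply: law => //; apply: channel_id.
- move=> D Phi F rho chPhi chF dens.
  have chFPhi := channel_comp chPhi chF.
  by rewrite (law _ _ Phi) // (law _ _ (F \o Phi)).
Qed.

Lemma id_formula_process_linear : id_formula star -> process_linear star.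
Proof.
move=> formula A B rho n lam Es mu F dens chEs chF eqF.
rewrite formula // (tensL_lincomb _ eqF).
apply: functional_extensionality => p; apply: functional_extensionality => q /=.
by apply: eq_bigr => k _; rewrite (formula _ _ (Es k)).
Qed.

Lemma id_formula_linear_extension :
  id_formula star -> linear_extension_via_formula star star_via_id.
Proof.
move=> formula A B rho dens; split=> [a Phi Psi _ _ | // | Phi chPhi].
- exact: tensL_add_scale.
- by rewrite (formula _ _ Phi).
Qed.

End StateOverTime.

Theorem proposition2 (R : realType) (star : StarFun R[i]) (ext : ExtFun R[i]) :
  state_over_time star -> axiomE star ext ->
  (axiomP star ext <-> id_formula star) /\
  (axiomP star ext ->
     process_linear star /\
     exists starL : LinStarFun R[i], linear_extension_via_formula star starL).
Proof.
move=> _ axE.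
have P_formula : axiomP star ext <-> id_formula star.
  exact: iff_trans (axiomP_star_comp_law axE) (star_comp_law_id_formula star).
split=> // /P_formula formula; split; first exact: id_formula_process_linear.
by exists (star_via_id star); apply: id_formula_linear_extension.
Qed.
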